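(* Let $H=(V,E)$ be a finite simple graph, let $M$ be a maximum $2$-matching of $H$, and let $(v_0,\dots,v_{2i+2};x_0,x_2,\dots,x_{2i})$ be a B-alternating path saving an object $O_0$ of $M$. Define $$M'=\bigl(M\setminus\{v_{2j+1}v_{2j+2}:0\le j\le i\}\bigr)\cup\{x_{2j}v_{2j+1}:0\le j\le i\}.$$ Then $M'$ is a maximum $2$-matching of $H$. Moreover, the number of components of $(V,M')$ that are $0$-paths or $1$-paths is exactly one less than the corresponding number for $(V,M)$.
   Context: A $2$-matching of $H$ is a set $M\subseteq E$ in which every vertex is incident to at most two edges of $M$. It is maximum if $|M|$ is as large as possible. The components of $(V,M)$ are paths and cycles. A single vertex counts as a $0$-path, and a $k$-path has $k$ edges. An object of $M$ is the vertex set of a component of $(V,M)$ that is a $0$-path or a $1$-path. A B-alternating path saving the object $O_0$ consists of pairwise distinct vertices $v_0,v_1,\dots,v_{2i+2}$ (with $i\ge 0$), together with vertices $x_0,x_2,\dots,x_{2i}$, satisfying: (1) $v_0\in O_0$ and $x_0=v_0$. (2) For each $j=1,\dots,i$ there is a component $P_j$ of $(V,M)$ that is a path with $2$, $3$ or $4$ edges, and $P_1,\dots,P_i$ are pairwise distinct. The vertex $v_{2j-1}$ is an internal vertex of $P_j$, and it is the middle vertex of $P_j$ if $P_j$ has $4$ edges. The vertex $v_{2j}$ is a neighbour of $v_{2j-1}$ on $P_j$. Let $O_j$ be the vertex set of the component of $P_j$ minus the edge $v_{2j-1}v_{2j}$ that contains $v_{2j}$. Then $x_{2j}\in O_j$.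 (3) $x_{2j}v_{2j+1}\in E\setminus M$ for every $j=0,\dots,i$. (4) The vertex $v_{2i+1}$ lies on a component $Q$ of $(V,M)$ different from $P_1,\dots,P_i$. The component $Q$ is either a cycle, or a path with at least $5$ edges, or a path with exactly $4$ edges of which $v_{2i+1}$ is not the middle vertex. (5) $v_{2i+1}v_{2i+2}\in M$, and if $Q$ is a path then the component of $Q$ minus the edge $v_{2i+1}v_{2i+2}$ containing $v_{2i+2}$ has at least $3$ vertices. *)

From mathcomp Require Import all_boot.
Set Implicit Arguments. Unset Strict Implicit. Unset Printing Implicit Defensive.

Section Graphs.
Variable T : finType.

Definition simple_graph (E : {set {set T}}) : Prop :=
  forall f, f \in E -> #|f| = 2.

Definition two_matching (E M : {set {set T}}) : Prop :=
  M \subset E /\ forall w : T, #|[set f in M | w \in f]| <= 2.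

Definition max_two_matching (E M : {set {set T}}) : Prop :=
  two_matching E M /\ forall M', two_matching E M' -> #|M'| <= #|M|.

Definition madj (M : {set {set T}}) : rel T := fun a b => [set a; b] \in M.

Definition comp (M : {set {set T}}) (u : T) : {set T} :=
  [set w | connect (madj M) u w].

Definition is_component (M : {set {set T}}) (C : {set T}) : Prop :=
  exists u, C = comp M u.

Definition edges_in (M : {set {set T}}) (C : {set T}) : {set {set T}} :=
  [set f in M | f \subset C].

Definition path_edges (p : seq T) : {set {set T}} :=
  [set f : {set T} | f \in [seq [set a.1; a.2] | a <- zip p (behead p)]].

Definition kpath_seq (M : {set {set T}}) (C : {set T}) (k : nat) (p : seq T) : bool :=
  [&& uniq p, size p == k.+1, [set a in p] == C & edges_in M C == path_edges p].

Definition is_kpath (M : {set {set T}}) (C : {set T}) (k : nat) : bool :=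
  [exists p : (k.+1).-tuple T, kpath_seq M C k p].

Definition is_cycle (M : {set {set T}}) (C : {set T}) : Prop :=
  exists p : seq T, [/\ uniq p, 3 <= size p, [set a in p] = C &
                        edges_in M C = path_edges (p ++ take 1 p)].

Definition is_object (M : {set {set T}}) (C : {set T}) : bool :=
  [exists u, C == comp M u] && (is_kpath M C 0 || is_kpath M C 1).

Definition num_objects (M : {set {set T}}) : nat :=
  #|[set C : {set T} | is_object M C]|.

Definition internal_vertex (M : {set {set T}}) (C : {set T}) (k : nat) (a : T) : Prop :=
  exists p : seq T, kpath_seq M C k p /\
    exists m, [/\ 0 < m < k, a = nth a p m & (k = 4 -> m = 2)].

Definition middle_vertex (M : {set {set T}}) (C : {set T}) (a : T) : Prop :=
  exists p : seq T, kpath_seq M C 4 p /\ a = nth a p 2.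

Definition B_alternating (E M : {set {set T}}) (O0 : {set T}) (i : nat)
    (v x : nat -> T) : Prop :=
  [/\ uniq [seq v k | k <- iota 0 (2 * i + 3)],
      is_object M O0 /\ v 0 \in O0 /\ x 0 = v 0,
      (exists (P : nat -> {set T}) (Q : {set T}),
        [/\ (forall j, 1 <= j <= i ->
               [/\ is_component M (P j),
                   (exists k, [/\ 2 <= k <= 4, is_kpath M (P j) k &
                                 internal_vertex M (P j) k (v (2 * j - 1))]),
                   v (2 * j) \in P j /\ [set v (2 * j - 1); v (2 * j)] \in M &
                   x (2 * j) \in comp (M :\ [set v (2 * j - 1); v (2 * j)]) (v (2 * j))]),
            (forall j1 j2, 1 <= j1 <= i -> 1 <= j2 <= i -> j1 <> j2 -> P j1 <> P j2),
            [/\ is_component M Q, v (2 * i + 1) \in Q & (forall j, 1 <= j <= i -> Q <> P j)],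
            (is_cycle M Q \/ (exists k, 5 <= k /\ is_kpath M Q k) \/
              (is_kpath M Q 4 /\ ~ middle_vertex M Q (v (2 * i + 1)))) &
            ((exists k, is_kpath M Q k) ->
               3 <= #|comp (M :\ [set v (2 * i + 1); v (2 * i + 2)]) (v (2 * i + 2))|)]),
      (forall j, j <= i -> [set x (2 * j); v (2 * j + 1)] \in E :\: M) &
      [set v (2 * i + 1); v (2 * i + 2)] \in M].

Definition switch (M : {set {set T}}) (i : nat) (v x : nat -> T) : {set {set T}} :=
  (M :\: [set [set v (2 * j + 1); v (2 * j + 2)] | j : 'I_i.+1])
    :|: [set [set x (2 * j); v (2 * j + 1)] | j : 'I_i.+1].

End Graphs.

(* The switch exchanges the i+1 edges v_{2j+1}v_{2j+2} of M for the i+1 non-edges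
   x_{2j}v_{2j+1}, which are pairwise vertex-disjoint, so |M'| >= |M|.  Degrees stay at most 2
   because every endpoint of a new edge keeps at most one old edge: v_{2j+1} loses
   v_{2j+1}v_{2j+2}, x_0 = v_0 lies in an object, and x_{2j} (j >= 1) is either v_{2j}, which
   loses an edge, or an end of the short side of P_j cut at v_{2j-1}v_{2j}.

   M and M' differ only by edges inside the set of vertices touched by the switch, so objects
   avoiding that set are common to both.  In M the only object meeting it is O_0, since every
   other touched vertex lies on some P_j or on Q.  In M' every touched vertex lies in a
   component with at least three vertices: v_{2j+1} keeps an old neighbour besides getting its
   new one (for j = i by maximality of M, as otherwise v_{2i+1}v_{2i+2} could be put back), x_{2j}
   is joined to v_{2j+1}, v_{2j} stays connected to x_{2j}, and v_{2i+2} keeps the three vertices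
   promised by condition (5), or two cycle edges if Q is a cycle.  Hence exactly O_0 is lost. *)

From mathcomp Require Import all_boot zify.
Set Implicit Arguments. Unset Strict Implicit. Unset Printing Implicit Defensive.

Section Components.
Variable T : finType.
Implicit Types (M : {set {set T}}) (a b w : T) (C : {set T}).

Lemma madj_sym M : symmetric (madj M).
Proof. by move=> a b; rewrite /madj setUC. Qed.

Lemma mem_comp M a : a \in comp M a.
Proof. by rewrite inE connect0. Qed.

Lemma comp_mem_eq M a b : b \in comp M a -> comp M b = comp M a.
Proof.
rewrite inE => Hab; apply/setP => w; rewrite !inE.
apply/idP/idP; first exact: connect_trans.
by rewrite (sym_connect_sym (madj_sym M)) in Hab; apply: connect_trans.
Qed.

Lemma component_mem_eq M C a : is_component M C -> a \in C -> comp M a = C.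
Proof. by move=> [u ->]; apply: comp_mem_eq. Qed.

Lemma component_eq M C1 C2 a : is_component M C1 -> is_component M C2 ->
  a \in C1 -> a \in C2 -> C1 = C2.
Proof. by move=> H1 H2 a1 a2; rewrite -(component_mem_eq H1 a1) (component_mem_eq H2 a2). Qed.

Lemma component_neq M C1 C2 a b : is_component M C1 -> is_component M C2 ->
  a \in C1 -> b \in C2 -> C1 <> C2 -> a != b.
Proof.
move=> H1 H2 a1 b2 neqC; apply/eqP => eq_ab; apply: neqC.
by rewrite -eq_ab in b2; apply: component_eq H1 H2 a1 b2.
Qed.

Lemma edge_mem_comp M a b : [set a; b] \in M -> b \in comp M a.
Proof. by move=> ab; rewrite inE connect1. Qed.

Lemma component_edge_closed M C a b :
  is_component M C -> a \in C -> [set a; b] \in M -> b \in C.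
Proof. by move=> HC aC ab; rewrite -(component_mem_eq HC aC); apply: edge_mem_comp. Qed.

Lemma connect_madj_setD1 M g a w : connect (madj (M :\ g)) a w -> connect (madj M) a w.
Proof. by apply: connect_sub => b c; rewrite /madj !inE => /andP[_ bc]; apply: connect1. Qed.

End Components.

Section PathSequences.
Variable T : finType.
Implicit Types (M : {set {set T}}) (a b c w z : T) (C : {set T}) (p : seq T).

Lemma set2_inj a b c d : [set a; b] = [set c; d] -> (a = c /\ b = d) \/ (a = d /\ b = c).
Proof.
move=> eq_ab.
have : a \in [set c; d] by rewrite -eq_ab !inE eqxx.
have : b \in [set c; d] by rewrite -eq_ab !inE eqxx orbT.
have : c \in [set a; b] by rewrite eq_ab !inE eqxx.
have : d \in [set a; b] by rewrite eq_ab !inE eqxx orbT.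
by rewrite !inE => /orP[]/eqP ? /orP[]/eqP ? /orP[]/eqP ? /orP[]/eqP ?; subst; auto.
Qed.

Lemma set2_neq0 a b : [set a; b] != set0.
Proof. by apply/set0Pn; exists a; rewrite !inE eqxx. Qed.

Lemma simple_graph_neq M a b : simple_graph M -> [set a; b] \in M -> a != b.
Proof. by move=> HM /HM; rewrite cards2; case: (a != b). Qed.

Lemma simple_graph_edge M g a : simple_graph M -> g \in M -> a \in g ->
  exists b, g = [set a; b].
Proof.
move=> HM gM ag; have /cards2P [c [d [_ def_g]]] : #|g| == 2 by rewrite HM.
by move: ag; rewrite def_g !inE => /orP[]/eqP ->; [exists d | exists c; rewrite setUC].
Qed.

Definition incident M w := [set g in M | w \in g].

Lemma incident_le1 N a : simple_graph N ->
  (forall b c, [set a; b] \in N -> [set a; c] \in N -> b = c) -> #|incident N a| <= 1.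
Proof.
move=> HN uniq_nbr; apply/card_le1_eqP => g1 g2; rewrite !inE => /andP[g1N a1] /andP[g2N a2].
have [b1 ?] := simple_graph_edge HN g1N a1; have [b2 ?] := simple_graph_edge HN g2N a2.
by subst g1 g2; rewrite (uniq_nbr b1 b2).
Qed.

Lemma card_ge3 C a b c : a != b -> a != c -> b != c ->
  a \in C -> b \in C -> c \in C -> 3 <= #|C|.
Proof.
move=> ab ac bc aC bC cC.
have <- : #|a |: (b |: [set c])| = 3 by rewrite !cardsU1 cards1 !inE negb_or ab ac bc.
by apply: subset_leq_card; apply/subsetP => w; rewrite !inE => /orP[|/orP[]]/eqP ->.
Qed.

Lemma size_zip_behead p : size (zip p (behead p)) = (size p).-1.
Proof. by rewrite size_zip size_behead; apply/minn_idPr/leq_pred. Qed.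

Lemma nth_zip_behead p z t : t.+1 < size p ->
  nth (z, z) (zip p (behead p)) t = (nth z p t, nth z p t.+1).
Proof.
move=> lt_t; rewrite nth_zip_cond size_zip_behead nth_behead.
by have -> : t < (size p).-1 by lia.
Qed.

Lemma mem_path_edges p z t : t.+1 < size p ->
  [set nth z p t; nth z p t.+1] \in path_edges p.
Proof.
move=> lt_t; rewrite inE; apply/mapP; exists (nth z p t, nth z p t.+1) => //.
by rewrite -nth_zip_behead //; apply: mem_nth; rewrite size_zip_behead; lia.
Qed.

Lemma path_edgesP p z g : g \in path_edges p ->
  exists2 t, t.+1 < size p & g = [set nth z p t; nth z p t.+1].
Proof.
rewrite inE => /mapP [ab /(nthP (z, z)) [t lt_t <-] ->].
have lt_t1 : t.+1 < size p by move: lt_t; rewrite size_zip_behead; lia.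
by exists t => //; rewrite nth_zip_behead.
Qed.

Lemma kpath_seq_card M C k p : kpath_seq M C k p -> #|C| = k.+1.
Proof. by case/and4P => Up /eqP <- /eqP <- _; rewrite cardsE (card_uniqP Up). Qed.

Lemma is_kpath_card M C k : is_kpath M C k -> #|C| = k.+1.
Proof. by case/existsP => p /kpath_seq_card. Qed.

Lemma is_cycle_card M C : is_cycle M C -> 3 <= #|C|.
Proof. by case=> p [Up p3 <- _]; rewrite cardsE (card_uniqP Up). Qed.

Lemma is_object_card M C : is_object M C -> #|C| <= 2.
Proof. by case/andP => _ /orP[]/is_kpath_card ->. Qed.

Lemma kpath_seq_mem M C k p z s : kpath_seq M C k p -> s < size p -> nth z p s \in C.
Proof. by case/and4P => _ _ /eqP <- _ lt_s; rewrite inE mem_nth. Qed.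

Lemma kpath_seq_edge M C k p z t : kpath_seq M C k p -> t.+1 < size p ->
  [set nth z p t; nth z p t.+1] \in M.
Proof.
case/and4P => _ _ _ /eqP edgesC lt_t.
by have := mem_path_edges z lt_t; rewrite -edgesC inE => /andP[].
Qed.

Lemma kpath_seq_nbr M C k p z s b : is_component M C -> kpath_seq M C k p -> s < size p ->
  [set nth z p s; b] \in M ->
  (0 < s /\ b = nth z p s.-1) \/ (s.+1 < size p /\ b = nth z p s.+1).
Proof.
move=> HC Hp lt_s sbM.
have sC := kpath_seq_mem z Hp lt_s; have bC := component_edge_closed HC sC sbM.
move: (Hp) => /and4P [Up _ _ /eqP edgesC].
have : [set nth z p s; b] \in edges_in M C.
  by rewrite inE sbM; apply/subsetP => w; rewrite !inE => /orP[]/eqP ->.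
have nth_inj j : j < size p -> nth z p s = nth z p j -> s = j.
  by move=> lt_j /eqP; rewrite nth_uniq // => /eqP.
rewrite edgesC => /(path_edgesP z) [t lt_t /set2_inj [[/nth_inj st ->]|[/nth_inj st ->]]].
- by right; rewrite st; last lia.
- by left; rewrite st; last lia.
Qed.

Lemma kpath_seq_endpoint_nbr M C k p z s b c : is_component M C -> kpath_seq M C k p ->
  s < size p -> (s = 0 \/ s.+1 = size p) ->
  [set nth z p s; b] \in M -> [set nth z p s; c] \in M -> b = c.
Proof.
move=> HC Hp lt_s end_s /(kpath_seq_nbr HC Hp lt_s) Hb /(kpath_seq_nbr HC Hp lt_s) Hc.
by case: Hb Hc => [[? ->]|[? ->]] [[? ->]|[? ->]] //; lia.
Qed.

Lemma kpath_seq_connect_hi M C k p z m w : is_component M C -> kpath_seq M C k p ->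
  m.+1 < size p ->
  connect (madj (M :\ [set nth z p m; nth z p m.+1])) (nth z p m.+1) w ->
  exists2 t, m < t < size p & w = nth z p t.
Proof.
move=> HC Hp lt_m /connectP [q]; set g := [set _; _].
suff IH s : m < s -> s < size p -> path (madj (M :\ g)) (nth z p s) q ->
    exists2 t, m < t < size p & last (nth z p s) q = nth z p t.
  by move=> /IH-/(_ (ltnSn m) lt_m) + ->.
elim: q s => [|b q IH] s lt_ms lt_s /=; first by exists s; rewrite ?lt_ms.
rewrite {1}/madj !inE => /andP[/andP[sb_g sbM] Hq].
case: (kpath_seq_nbr HC Hp lt_s sbM) => [[s_gt0 eq_b]|[lt_s1 eq_b]]; rewrite eq_b in Hq *.
  have neq_ms : s != m.+1 by apply: contra sb_g => /eqP s_m; rewrite eq_b /g s_m setUC eqxx.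
  by apply: (IH s.-1 _ _ Hq); lia.
by apply: (IH s.+1 _ lt_s1 Hq); lia.
Qed.

Lemma kpath_seq_connect_lo M C k p z m w : is_component M C -> kpath_seq M C k p ->
  m.+1 < size p ->
  connect (madj (M :\ [set nth z p m.+1; nth z p m])) (nth z p m) w ->
  exists2 t, t <= m & w = nth z p t.
Proof.
move=> HC Hp lt_m /connectP [q]; set g := [set _; _].
suff IH s : s <= m -> path (madj (M :\ g)) (nth z p s) q ->
    exists2 t, t <= m & last (nth z p s) q = nth z p t.
  by move=> /IH-/(_ (leqnn m)) + ->.
elim: q s => [|b q IH] s le_sm /=; first by exists s.
rewrite {1}/madj !inE => /andP[/andP[sb_g sbM] Hq].
have lt_s : s < size p by lia.
case: (kpath_seq_nbr HC Hp lt_s sbM) => [[s_gt0 eq_b]|[lt_s1 eq_b]]; rewrite eq_b in Hq *.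
  by apply: (IH s.-1 _ Hq); lia.
have neq_sm : s != m by apply: contra sb_g => /eqP s_m; rewrite eq_b /g s_m setUC eqxx.
by apply: (IH s.+1 _ Hq); lia.
Qed.

Lemma internal_vertex_nbrs M C k a : internal_vertex M C k a ->
  exists b c, [/\ b != c, [set a; b] \in M & [set a; c] \in M].
Proof.
case=> p [Hp [[|m] [/andP[// _ lt_mk] -> _]]].
have [Up size_p] : uniq p /\ size p = k.+1 by case/and4P: Hp => ? /eqP.
exists (nth a p m), (nth a p m.+2); split.
- by rewrite nth_uniq ?size_p //; lia.
- by rewrite setUC; apply: kpath_seq_edge Hp _; lia.
- by apply: kpath_seq_edge Hp _; lia.
Qed.

Lemma is_cycle_nbrs M C a : is_cycle M C -> a \in C ->
  exists b c, [/\ b != c, [set a; b] \in M & [set a; c] \in M].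
Proof.
case=> p [Up p3 <- edgesC]; rewrite inE => /(nthP a) [s lt_s <-].
have take1 : take 1 p = [:: nth a p 0].
  by case: p p3 {Up lt_s edgesC} => // b q _; rewrite /= take0.
have cycle_edge t : t < size p -> [set nth a p t; nth a p (t.+1 %% size p)] \in M.
  move=> lt_t; have /(mem_path_edges a) : t.+1 < size (p ++ take 1 p).
    by rewrite size_cat take1 addn1.
  rewrite -edgesC inE => /andP[+ _]; rewrite !nth_cat lt_t take1.
  case: (ltnP t.+1 (size p)) => [lt_t1|ge_t1]; first by rewrite modn_small.
  have -> : t.+1 = size p by lia.
  by rewrite subnn modnn.
set n := size p in lt_s p3 cycle_edge.
pose r := if s is s'.+1 then s' else n.-1.
have lt_r : r < n by rewrite /r; case: (s) lt_s; lia.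
have succ_r : r.+1 %% n = s.
  by rewrite /r; case: (s) lt_s => [|s'] lt_s; [rewrite prednK ?modnn //; lia | rewrite modn_small].
exists (nth a p (s.+1 %% n)), (nth a p r); split.
- rewrite nth_uniq ?ltn_pmod //; last lia.
  case: (ltnP s.+1 n) => [lt_s1|ge_s1]; first by rewrite modn_small // /r; case: (s) lt_s1; lia.
  have -> : s.+1 = n by lia.
  by rewrite modnn /r; case: (s) ge_s1 lt_s; lia.
- exact: cycle_edge.
- by rewrite setUC -{1}succ_r; apply: cycle_edge.
Qed.

(* The hypotheses on [k] and [m] say that cutting the path at [nth z p m] leaves at most two
   vertices on the side of [b]; so [w] is [b] or the end of the path on that side. *)
Lemma kpath_seq_short_side M C k p z m b w : simple_graph M -> is_component M C ->
  kpath_seq M C k p -> 0 < m < k -> k <= 4 -> (k = 4 -> m = 2) ->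
  [set nth z p m; b] \in M -> w \in comp (M :\ [set nth z p m; b]) b ->
  w != nth z p m /\ (w != b -> #|incident M w| <= 1).
Proof.
move=> HM HC Hp m_range le_k4 mid_m mbM; rewrite inE.
have [Up size_p] : uniq p /\ size p = k.+1 by case/and4P: Hp => ? /eqP.
have neq_nth t s : t < size p -> s < size p -> t != s -> nth z p t != nth z p s.
  by move=> lt_t lt_s; rewrite nth_uniq.
have endpoint_le1 t : t < size p -> (t = 0 \/ t.+1 = size p) ->
    #|incident M (nth z p t)| <= 1.
  move=> lt_t end_t; apply: incident_le1 => // c d.
  exact: (kpath_seq_endpoint_nbr HC Hp lt_t end_t).
have lt_m : m < size p by lia.
case: (kpath_seq_nbr HC Hp lt_m mbM) => [[m_gt0 ->]|[lt_m1 ->]].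
- case: m m_range mid_m m_gt0 lt_m {mbM} => // m m_range mid_m _ lt_m /=.
  case/(kpath_seq_connect_lo HC Hp lt_m) => t le_tm ->.
  split=> [|neq_tb]; first by apply: neq_nth; lia.
  have neq_tm : t != m by apply: contraNneq neq_tb => ->.
  by apply: endpoint_le1; lia.
- case/(kpath_seq_connect_hi HC Hp lt_m1) => t /andP[lt_mt lt_t] ->.
  split=> [|neq_tb]; first by apply: neq_nth; lia.
  have neq_tm : t != m.+1 by apply: contraNneq neq_tb => ->.
  by apply: endpoint_le1; lia.
Qed.

End PathSequences.

Section Transfer.
Variable T : finType.
Implicit Types (E N : {set {set T}}) (u w : T) (C S Y g : {set T}).

Lemma two_matching_setU1 E N g : two_matching E N -> g \in E ->
  (forall w, w \in g -> #|incident N w| <= 1) -> two_matching E (g |: N).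
Proof.
move=> [NE degN] gE deg_g; split; first by rewrite subUset sub1set gE.
move=> w; case: (boolP (w \in g)) => wg.
  have : [set f in g |: N | w \in f] \subset g |: incident N w.
    by apply/subsetP => f; rewrite !inE => /andP[/orP[->|->] ->]; rewrite ?orbT.
  by move/subset_leq_card/leq_trans; apply; rewrite cardsU1 (leq_add (leq_b1 _) (deg_g w wg)).
have -> : [set f in g |: N | w \in f] = [set f in N | w \in f].
  by apply/setP => f; rewrite !inE; case: (f =P g) => [->|] //=; rewrite (negbTE wg) andbF.
exact: degN.
Qed.

(* Walks from [u] along [N1] survive in [N2]: a lost edge would have to leave [S]. *)
Lemma connect_madj_lost_outside N1 N2 S u w :
  (forall g, g \in N1 -> g \notin N2 -> exists2 z, z \in g & z \notin S) ->
  (forall w, connect (madj N1) u w -> w \in S) ->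
  connect (madj N1) u w -> connect (madj N2) u w.
Proof.
move=> lost_out compS /connectP [p Hp ->].
suff IH a : connect (madj N1) u a -> connect (madj N2) u a -> path (madj N1) a p ->
    connect (madj N2) u (last a p) by apply: IH.
elim: p a {Hp} => [//|b p IH] a H1 H2 /= /andP[ab Hp].
have H1b : connect (madj N1) u b := connect_trans H1 (connect1 ab).
apply: IH Hp => //; apply: connect_trans H2 (connect1 _); rewrite /madj.
apply/negPn/negP => abN2; have [z] := lost_out _ ab abN2.
by rewrite !inE => /orP[]/eqP ->; rewrite ?compS.
Qed.

Lemma connect_madj_gained_inside N1 N2 Y u w :
  (forall g, g \in N2 -> g \notin N1 -> g \subset Y) ->
  (forall w, connect (madj N1) u w -> w \notin Y) ->
  connect (madj N2) u w -> connect (madj N1) u w.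
Proof.
move=> gained_in compY /connectP [p Hp ->].
suff IH a : connect (madj N1) u a -> path (madj N2) a p -> connect (madj N1) u (last a p).
  by apply: IH.
elim: p a {Hp} => [//|b p IH] a H1 /= /andP[ab Hp].
apply: IH Hp; apply: (connect_trans H1 (connect1 _)); rewrite /madj.
apply/negPn/negP => abN1; have /subsetP/(_ a) := gained_in _ ab abN1.
by rewrite !inE eqxx => /(_ isT) aY; move: (compY _ H1); rewrite aY.
Qed.

Definition differ_within N1 N2 Y :=
  forall g, (g \in N1) != (g \in N2) -> g \subset Y /\ g != set0.

Lemma differ_within_sym N1 N2 Y : differ_within N1 N2 Y -> differ_within N2 N1 Y.
Proof. by move=> HD g; rewrite eq_sym; apply: HD. Qed.

Lemma comp_differ_within N1 N2 Y u : differ_within N1 N2 Y ->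
  (forall w, connect (madj N1) u w -> w \notin Y) -> comp N1 u = comp N2 u.
Proof.
move=> HD compY; apply/setP => w; rewrite !inE; apply/idP/idP.
- apply: (connect_madj_lost_outside (S := ~: Y)); last by move=> w' /compY; rewrite inE.
  move=> g gN1 gN2; have /HD [/subsetP gY /set0Pn [z zg]] : (g \in N1) != (g \in N2).
    by rewrite gN1 (negbTE gN2).
  by exists z; rewrite // inE negbK gY.
- apply: (connect_madj_gained_inside (Y := Y)) compY.
  by move=> g gN2 gN1; case: (HD g); rewrite // gN2 (negbTE gN1).
Qed.

Lemma is_object_differ_within N1 N2 Y C : differ_within N1 N2 Y ->
  (forall y, y \in Y -> y \notin C) -> is_object N1 C -> is_object N2 C.
Proof.
move=> HD CY /andP[/existsP [u /eqP defC] Hk].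
have compC : comp N1 u = comp N2 u.
  by apply: (comp_differ_within HD) => w uw; apply/negP => /CY; rewrite defC inE uw.
have edgesC : edges_in N1 C = edges_in N2 C.
  apply/setP => g; rewrite !inE.
  case: (boolP (g \subset C)) => [/subsetP gC|]; last by rewrite !andbF.
  rewrite !andbT; apply/eqP/negPn/negP => /HD [/subsetP gY /set0Pn [z zg]].
  by move: (CY z (gY z zg)); rewrite gC.
apply/andP; split; first by apply/existsP; exists u; rewrite defC compC.
by move: Hk; rewrite /is_kpath /kpath_seq edgesC.
Qed.

End Transfer.

Lemma mul2S k : 2 * k.+1 = 2 * k + 2.
Proof. by rewrite mulnS addnC. Qed.

Lemma mul2S_sub1 k : 2 * k.+1 - 1 = 2 * k + 1.
Proof. by rewrite mul2S addnS subn1. Qed.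

Section Switch.
Variables (T : finType) (E M : {set {set T}}) (O0 : {set T}) (i : nat) (v x : nat -> T).
Variables (P : nat -> {set T}) (Q : {set T}).
Hypothesis simpleE : simple_graph E.
Hypothesis ME : M \subset E.
Hypothesis degM : forall w, #|incident M w| <= 2.
Hypothesis maxM : forall N, two_matching E N -> #|N| <= #|M|.
Hypothesis uniq_v : uniq [seq v k | k <- iota 0 (2 * i + 3)].
Hypothesis objO0 : is_object M O0.
Hypothesis v0_O0 : v 0 \in O0.
Hypothesis x0_v0 : x 0 = v 0.
Hypothesis P_spec : forall j, 1 <= j <= i ->
  [/\ is_component M (P j),
      (exists k, [/\ 2 <= k <= 4, is_kpath M (P j) k &
                    internal_vertex M (P j) k (v (2 * j - 1))]),
      v (2 * j) \in P j /\ [set v (2 * j - 1); v (2 * j)] \in M &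
      x (2 * j) \in comp (M :\ [set v (2 * j - 1); v (2 * j)]) (v (2 * j))].
Hypothesis P_neq : forall j1 j2, 1 <= j1 <= i -> 1 <= j2 <= i -> j1 <> j2 -> P j1 <> P j2.
Hypothesis Q_component : is_component M Q.
Hypothesis vQ : v (2 * i + 1) \in Q.
Hypothesis Q_neq_P : forall j, 1 <= j <= i -> Q <> P j.
Hypothesis Q_shape : is_cycle M Q \/ (exists k, 5 <= k /\ is_kpath M Q k) \/
  (is_kpath M Q 4 /\ ~ middle_vertex M Q (v (2 * i + 1))).
Hypothesis Q_tail : (exists k, is_kpath M Q k) ->
  3 <= #|comp (M :\ [set v (2 * i + 1); v (2 * i + 2)]) (v (2 * i + 2))|.
Hypothesis added_nonM : forall j, j <= i -> [set x (2 * j); v (2 * j + 1)] \in E :\: M.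
Hypothesis last_edgeM : [set v (2 * i + 1); v (2 * i + 2)] \in M.

Definition removed_edge k := [set v (2 * k + 1); v (2 * k + 2)].
Definition added_edge k := [set x (2 * k); v (2 * k + 1)].
Definition removed := [set removed_edge j | j : 'I_i.+1].
Definition added := [set added_edge j | j : 'I_i.+1].
Definition switched := (M :\: removed) :|: added.
Definition touched := \bigcup_(k < i.+1) (removed_edge k :|: added_edge k).

Lemma v_inj a b : a < 2 * i + 3 -> b < 2 * i + 3 -> v a = v b -> a = b.
Proof.
move=> lt_a lt_b eq_v; have := nth_uniq (v 0) _ _ uniq_v.
rewrite size_map size_iota => /(_ a b lt_a lt_b).
by rewrite !(nth_map 0) ?size_iota // !nth_iota // eq_v eqxx => /esym/eqP.
Qed.

Lemma v_odd_inj a b : a <= i -> b <= i -> v (2 * a + 1) = v (2 * b + 1) -> a = b.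
Proof. by move=> le_a le_b /v_inj; lia. Qed.

Lemma v_odd_neq_even a b : a <= i -> b <= i -> v (2 * a + 1) != v (2 * b + 2).
Proof. by move=> le_a le_b; apply/eqP => /v_inj; lia. Qed.

Lemma M_simple : simple_graph M.
Proof. by move=> g /(subsetP ME); apply: simpleE. Qed.

Lemma removedP g : reflect (exists2 k, k <= i & g = removed_edge k) (g \in removed).
Proof.
apply: (iffP imsetP) => [[k _ ->]|[k le_ki ->]]; first by exists k => //; rewrite -ltnS.
by exists (Ordinal (le_ki : k < i.+1)).
Qed.

Lemma addedP g : reflect (exists2 k, k <= i & g = added_edge k) (g \in added).
Proof.
apply: (iffP imsetP) => [[k _ ->]|[k le_ki ->]]; first by exists k => //; rewrite -ltnS.
by exists (Ordinal (le_ki : k < i.+1)).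
Qed.

Lemma touchedP w :
  reflect (exists2 k, k <= i & w \in removed_edge k :|: added_edge k) (w \in touched).
Proof.
apply: (iffP bigcupP) => [[k _ wk]|[k le_ki wk]]; first by exists k => //; rewrite -ltnS.
by exists (Ordinal (le_ki : k < i.+1)).
Qed.

Lemma added_edgeE k : k <= i -> added_edge k \in E.
Proof. by move/added_nonM; rewrite inE => /andP[]. Qed.

Lemma added_edge_notinM k : k <= i -> added_edge k \notin M.
Proof. by move/added_nonM; rewrite inE => /andP[]. Qed.

Lemma O0_component : is_component M O0.
Proof. by case/andP: objO0 => /existsP [u /eqP ->] _; exists u. Qed.

Lemma O0_card : #|O0| <= 2.
Proof. exact: is_object_card objO0. Qed.

Lemma Q_card : 3 <= #|Q|.
Proof.
by case: Q_shape => [/is_cycle_card|[[k [le5k /is_kpath_card ->]]|[/is_kpath_card -> _]]] //; lia.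
Qed.

Lemma vQ_even : v (2 * i + 2) \in Q.
Proof. exact: component_edge_closed Q_component vQ last_edgeM. Qed.

Section InnerPath.
Variable j : nat.
Hypothesis j_range : 1 <= j <= i.

Lemma P_component : is_component M (P j).
Proof. by case/P_spec: j_range. Qed.

Lemma P_card : 3 <= #|P j|.
Proof. by case/P_spec: j_range => _ [k [k_range /is_kpath_card -> _]] _ _; lia. Qed.

Lemma vP_odd : v (2 * j - 1) \in P j.
Proof.
case/P_spec: j_range => _ [k [_ _ [p [Hp [m [lt_mk def_v _]]]]]] _ _.
rewrite def_v; apply: (kpath_seq_mem _ Hp).
by case/and4P: Hp => _ /eqP -> _ _; case/andP: lt_mk => _ /ltnW.
Qed.

Lemma vP_even : v (2 * j) \in P j.
Proof. by case/P_spec: j_range => _ _ []. Qed.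

Lemma xP : x (2 * j) \in P j.
Proof.
case/P_spec: j_range => HC _ _; rewrite inE => /connect_madj_setD1 vx.
by rewrite -(component_mem_eq HC vP_even) inE.
Qed.

End InnerPath.

Lemma P_inj j1 j2 : 1 <= j1 <= i -> 1 <= j2 <= i -> P j1 = P j2 -> j1 = j2.
Proof. by move=> H1 H2 eqP12; case: (j1 =P j2) => // /(P_neq H1 H2). Qed.

Lemma O0_neq_P j : 1 <= j <= i -> O0 <> P j.
Proof.
by move=> j_range eq_O; have := P_card j_range; rewrite -eq_O => /leq_trans/(_ O0_card).
Qed.

Lemma O0_neq_Q : O0 <> Q.
Proof. by move=> eq_O; have := Q_card; rewrite -eq_O => /leq_trans/(_ O0_card). Qed.

Definition vcomp k := if k < i then P k.+1 else Q.
Definition xcomp j := if j == 0 then O0 else P j.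

Lemma vcompP k : k <= i ->
  [/\ is_component M (vcomp k), v (2 * k + 1) \in vcomp k & v (2 * k + 2) \in vcomp k].
Proof.
rewrite /vcomp; case: (ltnP k i) => [lt_ki _|le_ik le_ki]; last first.
  have -> : k = i by apply/anti_leq; rewrite le_ki le_ik.
  by split; [apply: Q_component | apply: vQ | apply: vQ_even].
have j_range : 1 <= k.+1 <= i by rewrite ltn0Sn lt_ki.
rewrite -mul2S -mul2S_sub1.
by split; [apply: P_component | apply: vP_odd | apply: vP_even].
Qed.

Lemma vcomp_card k : k <= i -> 3 <= #|vcomp k|.
Proof.
rewrite /vcomp; case: (ltnP k i) => [lt_ki _|_ _]; last exact: Q_card.
by apply: P_card; rewrite ltn0Sn.
Qed.

Lemma xcompP j : j <= i -> is_component M (xcomp j) /\ x (2 * j) \in xcomp j.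
Proof.
rewrite /xcomp; case: eqP => [->|/eqP j_gt0] le_ji.
  by rewrite x0_v0; split; [apply: O0_component|].
by split; [apply: P_component | apply: xP]; rewrite lt0n j_gt0.
Qed.

Lemma xcomp_inj j1 j2 : j1 <= i -> j2 <= i -> xcomp j1 = xcomp j2 -> j1 = j2.
Proof.
rewrite /xcomp => le1 le2; case: eqP => [->|/eqP j1_gt0]; case: eqP => [->|/eqP j2_gt0] // eq12.
- by case: (O0_neq_P (j := j2)); rewrite ?lt0n ?j2_gt0.
- by case: (O0_neq_P (j := j1)); rewrite ?lt0n ?j1_gt0.
- by apply: P_inj eq12; rewrite lt0n ?j1_gt0 ?j2_gt0.
Qed.

Lemma xcomp_vcomp j k : j <= i -> k <= i -> xcomp j = vcomp k -> j = k.+1.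
Proof.
rewrite /xcomp /vcomp => le_j le_k.
case: eqP => [_|/eqP j_gt0]; case: (ltnP k i) => lt_k eq_jk.
- by case: (O0_neq_P (j := k.+1)); rewrite ?ltn0Sn.
- by case: O0_neq_Q.
- by apply: P_inj eq_jk; rewrite ?ltn0Sn // lt0n j_gt0.
- by exfalso; apply: (Q_neq_P (j := j)); [rewrite lt0n j_gt0 | rewrite eq_jk].
Qed.

Lemma x_short_side j : 1 <= j <= i ->
  x (2 * j) != v (2 * j - 1) /\ (x (2 * j) != v (2 * j) -> #|incident M (x (2 * j))| <= 1).
Proof.
case/P_spec => HC [k [/andP[_ le_k4] _ [p [Hp [m [m_range def_v mid_m]]]]]] [_ vvM] x_comp.
by rewrite def_v in vvM x_comp *; apply: (kpath_seq_short_side M_simple HC Hp).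
Qed.

Lemma removed_edgeM k : k <= i -> removed_edge k \in M.
Proof.
move=> le_ki; rewrite /removed_edge; case: (ltnP k i) => [lt_ki|ge_ki]; last first.
  by have -> : k = i by apply/anti_leq; rewrite le_ki ge_ki.
have [_ _ [_]] := P_spec (j := k.+1) ltac:(by rewrite ltn0Sn lt_ki).
by rewrite mul2S_sub1 mul2S.
Qed.

Lemma x_neq_v_odd j k : j <= i -> k <= i -> x (2 * j) != v (2 * k + 1).
Proof.
move=> le_j le_k; have [HCx xC] := xcompP le_j; have [HCv vC _] := vcompP le_k.
case: (boolP (xcomp j == vcomp k)) => [/eqP eq_comp|]; last first.
  by move=> neq_comp; apply: (component_neq HCx HCv xC vC) => /eqP; rewrite (negbTE neq_comp).
have eq_j := xcomp_vcomp le_j le_k eq_comp; subst j.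
by have [+ _] := x_short_side (j := k.+1) ltac:(by rewrite ltn0Sn); rewrite mul2S_sub1.
Qed.

Lemma x_neq_v_last j : j <= i -> x (2 * j) != v (2 * i + 2).
Proof.
move=> le_j; have [HCx xC] := xcompP le_j; have [HCv _ vC] := vcompP (leqnn i).
apply: (component_neq HCx HCv xC vC) => /(xcomp_vcomp le_j (leqnn i)) eq_j.
by rewrite eq_j ltnn in le_j.
Qed.

Lemma x_inj j1 j2 : j1 <= i -> j2 <= i -> x (2 * j1) = x (2 * j2) -> j1 = j2.
Proof.
move=> le1 le2 eq_x; have [HC1 x1] := xcompP le1; have [HC2 x2] := xcompP le2.
by apply: xcomp_inj => //; apply: (component_eq HC1 HC2 x1); rewrite eq_x.
Qed.

Lemma added_edge_mem_inj w k1 k2 : k1 <= i -> k2 <= i ->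
  w \in added_edge k1 -> w \in added_edge k2 -> k1 = k2.
Proof.
move=> le1 le2; rewrite !inE => /orP[]/eqP -> /orP[]/eqP eq_w.
- exact: x_inj.
- by move: (x_neq_v_odd le1 le2); rewrite eq_w eqxx.
- by move: (x_neq_v_odd le2 le1); rewrite eq_w eqxx.
- exact: v_odd_inj.
Qed.

Lemma card_added : #|added| = i.+1.
Proof.
rewrite card_imset ?card_ord // => k1 k2 eq12; apply: val_inj.
have le_ord (k : 'I_i.+1) : k <= i by rewrite -ltnS.
apply: (added_edge_mem_inj (w := x (2 * k1)) (le_ord k1) (le_ord k2)).
  by rewrite !inE eqxx.
by rewrite -eq12 !inE eqxx.
Qed.

Lemma removed_subM : removed \subset M.
Proof. by apply/subsetP => g /removedP [k le_ki ->]; apply: removed_edgeM. Qed.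

Lemma card_removed : #|removed| <= i.+1.
Proof. by rewrite -[i.+1]card_ord leq_imset_card. Qed.

Lemma added_notinM g : g \in added -> g \notin M.
Proof. by case/addedP => k le_ki ->; apply: added_edge_notinM. Qed.

Lemma switched_subE : switched \subset E.
Proof.
apply/subsetP => g; rewrite !inE => /orP[/andP[_ /(subsetP ME)] //|/addedP [k le_ki ->]].
exact: added_edgeE.
Qed.

Lemma card_switched : #|M| <= #|switched|.
Proof.
have disj : (M :\: removed) :&: added = set0.
  apply/setP => g; rewrite !inE.
  by case: (boolP (g \in added)) => [/added_notinM/negbTE ->|]; rewrite ?andbF.
rewrite /switched cardsU disj cards0 subn0 cardsD (setIidPr removed_subM) card_added.
by rewrite addnBAC ?subset_leq_card ?removed_subM // -addnBA ?card_removed // leq_addr.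
Qed.

Lemma incident_switched_sub w :
  incident switched w \subset (incident M w :\: removed) :|: incident added w.
Proof. by apply/subsetP => g; rewrite !inE => /andP[/orP[/andP[-> ->]|->] ->]; rewrite ?orbT. Qed.

Lemma incident_added_le1 w : #|incident added w| <= 1.
Proof.
apply/card_le1_eqP => g1 g2; rewrite !inE.
move=> /andP[/addedP [k1 le1 ->] w1] /andP[/addedP [k2 le2 ->] w2].
by rewrite (added_edge_mem_inj le1 le2 w1 w2).
Qed.

Lemma incident_v0_le1 : #|incident M (v 0)| <= 1.
Proof.
apply: incident_le1 M_simple _ => b c v0b v0c; apply/eqP; apply/negPn/negP => neq_bc.
have O0_ge3 := card_ge3 (simple_graph_neq M_simple v0b) (simple_graph_neq M_simple v0c)
  neq_bc v0_O0 (component_edge_closed O0_component v0_O0 v0b)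
  (component_edge_closed O0_component v0_O0 v0c).
by have := leq_trans O0_ge3 O0_card.
Qed.

Lemma incident_removed_le1 k w : k <= i -> w \in removed_edge k ->
  #|incident M w :\: removed| <= 1.
Proof.
move=> le_ki wk; have gw : removed_edge k \in incident M w by rewrite inE removed_edgeM.
have gR : removed_edge k \in removed by apply/removedP; exists k.
have le1 : #|incident M w :\ removed_edge k| <= 1.
  by have := degM w; rewrite (cardsD1 (removed_edge k)) gw.
apply: leq_trans le1; apply: subset_leq_card; apply/subsetP => g; rewrite !inE.
by case/andP => gR' ->; rewrite andbT; apply: contraNneq gR' => ->.
Qed.

Lemma incident_kept_le1 k w : k <= i -> w \in added_edge k ->
  #|incident M w :\: removed| <= 1.
Proof.
move=> le_ki; rewrite !inE => /orP[]/eqP ->; last first.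
  by apply: (incident_removed_le1 le_ki); rewrite !inE eqxx.
case: k le_ki => [_|k le_ki].
  by rewrite x0_v0; apply: leq_trans (subset_leq_card (subsetDl _ _)) incident_v0_le1.
case: (x (2 * k.+1) =P v (2 * k.+1)) => [->|/eqP neq_xv].
  by apply: (incident_removed_le1 (k := k)); [exact: ltnW | rewrite mul2S !inE eqxx orbT].
apply: leq_trans (subset_leq_card (subsetDl _ _)) _.
by have [_] := x_short_side (j := k.+1) ltac:(by rewrite ltn0Sn); apply.
Qed.

Lemma incident_switched_le2 w : #|incident switched w| <= 2.
Proof.
apply: leq_trans (subset_leq_card (incident_switched_sub w)) _.
apply: leq_trans (leq_card_setU _ _) _.
case: (set_0Vmem (incident added w)) => [->|[g]].
  by rewrite cards0 addn0 (leq_trans (subset_leq_card (subsetDl _ _))).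
rewrite inE => /andP[/addedP [k le_ki ->] wk].
by rewrite (leq_add (incident_kept_le1 le_ki wk) (incident_added_le1 w)).
Qed.

Lemma switched_max : max_two_matching E switched.
Proof.
split; first by split; [apply: switched_subE | apply: incident_switched_le2].
by move=> N /maxM; move/leq_trans; apply; apply: card_switched.
Qed.

Lemma removed_edge_notin_switched : removed_edge i \notin switched.
Proof.
rewrite !inE negb_or negb_and negbK; apply/andP; split.
  by apply/orP; left; apply/removedP; exists i.
by apply: contraL (removed_edgeM (leqnn i)); apply: added_notinM.
Qed.

Lemma incident_switched_v_last : #|incident switched (v (2 * i + 2))| <= 1.
Proof.
have v_removed : v (2 * i + 2) \in removed_edge i by rewrite !inE eqxx orbT.
apply: leq_trans (incident_removed_le1 (leqnn i) v_removed); apply: subset_leq_card.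
apply/subsetP => g; rewrite !inE => /andP[/orP[/andP[gR gM] vg|gA vg]].
  by rewrite gR gM vg.
move: gA vg => /addedP [k le_ki ->]; rewrite !inE => /orP[]/eqP eq_v.
  by move: (x_neq_v_last le_ki); rewrite eq_v eqxx.
by move: (v_odd_neq_even le_ki (leqnn i)); rewrite eq_v eqxx.
Qed.

Lemma v_last_nbr : exists2 u, [set v (2 * i + 1); u] \in M & u != v (2 * i + 2).
Proof.
case: (pickP [pred u | ([set v (2 * i + 1); u] \in M) && (u != v (2 * i + 2))]).
  by move=> u /andP[]; exists u.
move=> none.
have only_last u : [set v (2 * i + 1); u] \in M -> u = v (2 * i + 2).
  by move=> uM; move: (none u); rewrite /= uM => /negbFE/eqP.
suff : two_matching E (removed_edge i |: switched).
  move/maxM; rewrite cardsU1 removed_edge_notin_switched add1n => lt_switched.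
  by have := leq_trans lt_switched card_switched; rewrite ltnn.
apply: two_matching_setU1; first by split; [apply: switched_subE | apply: incident_switched_le2].
  exact: (subsetP ME _ (removed_edgeM (leqnn i))).
move=> w; rewrite !inE => /orP[]/eqP ->; last exact: incident_switched_v_last.
apply: leq_trans (subset_leq_card (incident_switched_sub _)) _.
suff -> : incident M (v (2 * i + 1)) :\: removed = set0 by rewrite set0U incident_added_le1.
apply/setP => g; rewrite !inE; apply/negP => /and3P[gR gM vg].
have [u def_g] := simple_graph_edge M_simple gM vg.
by move: gR; rewrite def_g (only_last u) -?def_g //; apply/negP/negPn/removedP; exists i.
Qed.

Lemma kept_edge k b : k <= i -> [set v (2 * k + 1); b] \in M -> b != v (2 * k + 2) ->
  [set v (2 * k + 1); b] \in switched.
Proof.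
move=> le_ki bM neq_b; rewrite !inE bM andbT; apply/orP; left.
apply/removedP => -[k' le' /set2_inj [[eq_v eq_b]|[eq_v _]]].
- by move: neq_b; rewrite eq_b (v_odd_inj le_ki le' eq_v) eqxx.
- by move: (v_odd_neq_even le_ki le'); rewrite eq_v eqxx.
Qed.

Lemma v_odd_other_nbr k : k <= i ->
  exists2 b, [set v (2 * k + 1); b] \in M & b != v (2 * k + 2).
Proof.
move=> le_ki; case: (ltnP k i) => [lt_ki|ge_ki]; last first.
  have -> : k = i by apply/anti_leq; rewrite le_ki ge_ki.
  exact: v_last_nbr.
have [_ [k' [_ _ /internal_vertex_nbrs [b [c [neq_bc bM cM]]]]] _ _] :=
  P_spec (j := k.+1) ltac:(by rewrite ltn0Sn lt_ki).
rewrite -mul2S_sub1.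
case: (b =P v (2 * k + 2)) => [eq_b|/eqP neq_b]; last by exists b.
by exists c; rewrite // -eq_b eq_sym.
Qed.

Lemma switched_comp_v_odd_card k : k <= i -> 3 <= #|comp switched (v (2 * k + 1))|.
Proof.
move=> le_ki; have [b bM neq_b] := v_odd_other_nbr le_ki.
have added_k : [set v (2 * k + 1); x (2 * k)] \in switched.
  by rewrite setUC !inE; apply/orP; right; apply/addedP; exists k.
apply: (card_ge3 (a := v (2 * k + 1)) (b := b) (c := x (2 * k))).
- exact: simple_graph_neq M_simple bM.
- by rewrite eq_sym x_neq_v_odd.
- apply: contraNneq (added_edge_notinM le_ki) => eq_b.
  by rewrite /added_edge setUC -eq_b.
- exact: mem_comp.
- exact: edge_mem_comp (kept_edge le_ki bM neq_b).
- exact: edge_mem_comp.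
Qed.

Lemma kept_edge_Q u c : u \in Q -> u != v (2 * i + 1) -> u != v (2 * i + 2) ->
  [set u; c] \in M -> [set u; c] \in switched.
Proof.
move=> uQ neq_u1 neq_u2 ucM; rewrite !inE ucM andbT; apply/orP; left.
apply/removedP => -[k le_ki eq_uc].
have u_k : u \in removed_edge k by rewrite -eq_uc !inE eqxx.
case: (ltnP k i) => [lt_ki|ge_ki]; last first.
  have eq_k : k = i by apply/anti_leq; rewrite le_ki ge_ki.
  by rewrite eq_k !inE (negbTE neq_u1) (negbTE neq_u2) in u_k.
have [HCk v1 v2] := vcompP le_ki.
have u_vcomp : u \in vcomp k by move: u_k; rewrite !inE => /orP[]/eqP ->.
have := component_eq Q_component HCk uQ u_vcomp; rewrite /vcomp lt_ki.
by apply: Q_neq_P; rewrite ltn0Sn.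
Qed.

Lemma comp_v_last_subQ w : connect (madj M) (v (2 * i + 2)) w -> w \in Q.
Proof. by move=> vw; rewrite -(component_mem_eq Q_component vQ_even) inE. Qed.

Lemma switched_comp_v_last_card_path : (exists k, is_kpath M Q k) ->
  3 <= #|comp switched (v (2 * i + 2))|.
Proof.
move/Q_tail/leq_trans; apply; apply: subset_leq_card; apply/subsetP => w; rewrite !inE.
apply: (connect_madj_lost_outside (S := Q)); last first.
  by move=> w' /connect_madj_setD1; apply: comp_v_last_subQ.
move=> g; rewrite !inE => /andP[neq_g gM]; rewrite gM andbT negb_or negbK.
case/andP => /removedP [k le_ki eq_g] _.
have lt_ki : k < i.
  by rewrite ltn_neqAle le_ki andbT; apply: contraNneq neq_g => eq_k; rewrite eq_g eq_k.
have [HCk v1 _] := vcompP le_ki.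
exists (v (2 * k + 1)); first by rewrite eq_g !inE eqxx.
apply/negP => v1Q; have := component_eq Q_component HCk v1Q v1; rewrite /vcomp lt_ki.
by apply: Q_neq_P; rewrite ltn0Sn.
Qed.

Lemma switched_comp_v_last_card : 3 <= #|comp switched (v (2 * i + 2))|.
Proof.
case: Q_shape => [Q_cycle|[[k [_ Qk]]|[Q4 _]]]; last 2 first.
- by apply: switched_comp_v_last_card_path; exists k.
- by apply: switched_comp_v_last_card_path; exists 4.
have [b1 [b2 [neq_b12 b1M b2M]]] := is_cycle_nbrs Q_cycle vQ_even.
have [u uM neq_u1] : exists2 u, [set v (2 * i + 2); u] \in M & u != v (2 * i + 1).
  case: (b1 =P v (2 * i + 1)) => [eq_b1|/eqP]; last by exists b1.
  by exists b2; rewrite // -eq_b1 eq_sym.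
have uQ := component_edge_closed Q_component vQ_even uM.
have neq_u2 : u != v (2 * i + 2) by rewrite eq_sym (simple_graph_neq M_simple uM).
have [c1 [c2 [neq_c12 c1M c2M]]] := is_cycle_nbrs Q_cycle uQ.
have u_comp : u \in comp switched (v (2 * i + 2)).
  by apply: edge_mem_comp; rewrite setUC; apply: (kept_edge_Q uQ neq_u1 neq_u2); rewrite setUC.
rewrite -(comp_mem_eq u_comp); apply: (card_ge3 (a := u) (b := c1) (c := c2)) => //.
- exact: simple_graph_neq M_simple c1M.
- exact: simple_graph_neq M_simple c2M.
- exact: mem_comp.
- exact: edge_mem_comp (kept_edge_Q uQ neq_u1 neq_u2 c1M).
- exact: edge_mem_comp (kept_edge_Q uQ neq_u1 neq_u2 c2M).
Qed.

Lemma switched_comp_x_card j : j <= i -> 3 <= #|comp switched (x (2 * j))|.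
Proof.
move=> le_ji; have v_comp : v (2 * j + 1) \in comp switched (x (2 * j)).
  by apply: edge_mem_comp; rewrite !inE; apply/orP; right; apply/addedP; exists j.
by rewrite -(comp_mem_eq v_comp); apply: switched_comp_v_odd_card.
Qed.

Lemma connect_switched_v_even_x j : 1 <= j <= i ->
  connect (madj switched) (v (2 * j)) (x (2 * j)).
Proof.
move=> j_range; have [_ _ _] := P_spec j_range; rewrite inE.
apply: (connect_madj_lost_outside (S := P j)); last first.
  move=> w /connect_madj_setD1 vw.
  by rewrite -(component_mem_eq (P_component j_range) (vP_even j_range)) inE.
move=> g; rewrite !inE => /andP[neq_g gM]; rewrite gM andbT negb_or negbK.
case/andP => /removedP [k le_ki eq_g] _.
have [HCk v1 _] := vcompP le_ki.
exists (v (2 * k + 1)); first by rewrite eq_g !inE eqxx.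
have [j_gt0 le_ji] : 0 < j /\ j <= i by apply/andP.
apply/negP => v1P; have eq_comp : xcomp j = vcomp k.
  by rewrite /xcomp eqn0Ngt j_gt0; apply: (component_eq (P_component j_range) HCk v1P v1).
move: neq_g; rewrite eq_g /removed_edge (xcomp_vcomp le_ji le_ki eq_comp).
by rewrite mul2S_sub1 mul2S eqxx.
Qed.

Lemma comp_touched y : y \in touched -> comp M y = O0 \/ 3 <= #|comp M y|.
Proof.
case/touchedP => k le_ki y_k.
have [HCv v1 v2] := vcompP le_ki; have [HCx xk] := xcompP le_ki.
move: y_k; rewrite !inE -orbA => /or4P[]/eqP ->.
- by right; rewrite (component_mem_eq HCv v1) vcomp_card.
- by right; rewrite (component_mem_eq HCv v2) vcomp_card.
- rewrite (component_mem_eq HCx xk) /xcomp; case: eqP => [_|/eqP k_gt0]; [by left | right].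
  by apply: P_card; rewrite lt0n k_gt0.
- by right; rewrite (component_mem_eq HCv v1) vcomp_card.
Qed.

Lemma switched_comp_touched_card y : y \in touched -> 3 <= #|comp switched y|.
Proof.
case/touchedP => k le_ki; rewrite !inE -orbA => /or4P[]/eqP ->.
- exact: switched_comp_v_odd_card.
- case: (ltnP k i) => [lt_ki|ge_ki]; last first.
    have -> : k = i by apply/anti_leq; rewrite le_ki ge_ki.
    exact: switched_comp_v_last_card.
  have vx := connect_switched_v_even_x (j := k.+1) ltac:(by rewrite ltn0Sn lt_ki).
  have x_comp : x (2 * k.+1) \in comp switched (v (2 * k.+1)) by rewrite inE.
  by rewrite -mul2S -(comp_mem_eq x_comp) switched_comp_x_card.
- exact: switched_comp_x_card.
- exact: switched_comp_v_odd_card.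
Qed.

Lemma differ_within_switched : differ_within M switched touched.
Proof.
have edge_sub k : k <= i -> removed_edge k :|: added_edge k \subset touched.
  by move=> le_ki; apply/subsetP => w wk; apply/touchedP; exists k.
move=> g; rewrite !inE; case: (boolP (g \in added)) => [/addedP [k le_ki ->] _|_].
  by rewrite set2_neq0 (subset_trans (subsetUr _ _) (edge_sub k le_ki)).
case: (boolP (g \in removed)) => [/removedP [k le_ki ->] _|_]; last by rewrite /= orbF eqxx.
by rewrite set2_neq0 (subset_trans (subsetUl _ _) (edge_sub k le_ki)).
Qed.

Lemma num_objects_switched : (num_objects switched).+1 = num_objects M.
Proof.
have v0_touched : v 0 \in touched.
  by apply/touchedP; exists 0; rewrite // !inE x0_v0 eqxx orbT.
have off_touched N C : is_object N C -> (forall y, y \in touched -> comp N y = C -> False) ->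
    forall y, y \in touched -> y \notin C.
  move=> /andP[/existsP [u /eqP defC] _] notC y yY; apply/negP => yC.
  by apply: (notC y yY); rewrite defC (comp_mem_eq (a := u)) // -defC.
have new_off C : is_object switched C -> forall y, y \in touched -> y \notin C.
  move=> objC; apply: (off_touched _ _ objC) => y /switched_comp_touched_card + eq_C.
  by rewrite eq_C => /leq_trans/(_ (is_object_card objC)).
rewrite /num_objects.
have -> : [set C | is_object M C] = O0 |: [set C | is_object switched C].
  apply/setP => C; rewrite in_setU1 !inE; apply/idP/orP => [objC|[/eqP -> //|objC]].
    case: (C =P O0) => [-> | neq_C]; [by left | right].
    apply: (is_object_differ_within differ_within_switched _ objC).
    apply: (off_touched _ _ objC) => y /comp_touched [-> /esym //|+ eq_C].
    by rewrite eq_C => /leq_trans/(_ (is_object_card objC)).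
  exact: (is_object_differ_within (differ_within_sym differ_within_switched) (new_off C objC)).
rewrite cardsU1 inE; case: (boolP (is_object switched O0)) => // /new_off/(_ _ v0_touched).
by rewrite v0_O0.
Qed.

Lemma switch_correct :
  max_two_matching E switched /\ (num_objects switched).+1 = num_objects M.
Proof. by split; [apply: switched_max | apply: num_objects_switched]. Qed.

End Switch.

Theorem mainTheorem6 (T : finType) (E M : {set {set T}}) (O0 : {set T})
    (i : nat) (v x : nat -> T) :
  simple_graph E ->
  max_two_matching E M ->
  B_alternating E M O0 i v x ->
  max_two_matching E (switch M i v x) /\
  (num_objects (switch M i v x)).+1 = num_objects M.
Proof.
move=> simpleE [[ME degM] maxM] [uniq_v [objO0 [v0_O0 x0_v0]]
  [P [Q [P_spec P_neq [Q_component vQ Q_neq_P] Q_shape Q_tail]]] added_nonM last_edgeM].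
exact: (switch_correct simpleE ME degM maxM uniq_v objO0 v0_O0 x0_v0
  P_spec P_neq Q_component vQ Q_neq_P Q_shape Q_tail added_nonM last_edgeM).
Qed.
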